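(* Let $X$ and $Y$ be $\sigma$-compact metric spaces such that $X$ has no isolated points. For every closed set $T\subseteq X\times Y$ there exist a countable set $A\subseteq X$ and a function $f:A\to Y$ such that $L_f=T$.
   Context: For a function $f:A\to Y$ with $A\subseteq X$, $L_f$ denotes the set of accumulation points in $X\times Y$ of its graph $gr(f)=\{(x,f(x)):x\in A\}$. A space is $\sigma$-compact if it is a countable union of compact sets. *)

From HB Require Import structures.
From mathcomp Require Import all_boot all_order all_algebra.
From mathcomp Require Import all_classical all_reals all_analysis.
Set Implicit Arguments. Unset Strict Implicit. Unset Printing Implicit Defensive.
Local Open Scope classical_set_scope.

Definition sigma_compact (T : topologicalType) : Prop :=
  exists K : nat -> set T, (forall n, compact (K n)) /\ \bigcup_n K n = [set: T].

Definition graph_on {X Y : Type} (A : set X) (f : {x : X | A x} -> Y) : set (X * Y) :=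
  [set p | exists a : {x : X | A x}, p = (proj1_sig a, f a)].

Definition L_f {X Y : topologicalType} (A : set X) (f : {x : X | A x} -> Y)
  : set (X * Y) := limit_point (graph_on f).

From HB Require Import structures.
From mathcomp Require Import finmap.
From mathcomp Require Import all_boot all_order all_algebra.
From mathcomp Require Import all_classical all_reals all_analysis.
Set Implicit Arguments. Unset Strict Implicit. Unset Printing Implicit Defensive.
Import Order.TTheory GRing.Theory Num.Theory.
Local Open Scope classical_set_scope.
Local Open Scope ring_scope.

(* Pick a sequence (c_m) in T such that every term of a countable dense subset
   of T (which exists by sigma-compactness) occurs infinitely often; the index
   m |-> log_2 (m + 1) provides the repetitions. As X has no isolated points,
   we may choose pairwise distinct a_m within 1/(m+1) of (c_m).1 and set
   f a_m := (c_m).2. The graph points (a_m, f a_m) then shadow c_m ever more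
   closely: their accumulation points lie in the closed set T, and every point
   of T is approached by infinitely many distinct graph points. *)

(* [compact_cover] is only stated for pointed spaces; a point of [T] supplies
   the instance. *)
Section pointed_copy.
Variables (T : topologicalType) (t0 : T).

Definition pointed_at : Type := T.
HB.instance Definition _ := Topological.copy pointed_at T.
HB.instance Definition _ := isPointed.Build pointed_at t0.

Lemma compact_cover_at (A : set T) : compact A -> cover_compact A.
Proof. by move=> cA; change (@cover_compact pointed_at A); rewrite -compact_cover. Qed.

End pointed_copy.

Lemma compact_cover_compact (T : topologicalType) (A : set T) :
  compact A -> cover_compact A.
Proof.
have [->|/set0P [a _]] := eqVneq A set0; last exact: compact_cover_at.
by move=> _ I D f _ _; exists fset0.
Qed.

Lemma accessible_limit_point_infinite (T : topologicalType) (E U : set T) (t : T) :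
  accessible_space T -> limit_point E t -> nbhs t U -> infinite_set (U `&` E).
Proof.
move=> T1 Et tU finUE; suff : ~ limit_point E t by [].
rewrite not_limit_pointE.
pose B := U `&` E `\ t.
have clB : closed B by apply: (accessible_finite_set_closed.1 T1); exact: finite_setD.
exists (U `&` ~` B).
  apply: filterI => //; apply: open_nbhs_nbhs; split; first exact: closed_openC.
  by move=> [_]; apply.
by move=> y [Ey [Uy nBy]]; apply: contrapT => yt; apply: nBy.
Qed.

Lemma not_isolated_limit_point (T : topologicalType) (x : T) :
  ~ isolated [set: T] x -> limit_point [set: T] x.
Proof.
move=> nx; have : closure [set: T] x by exact: subset_closure.
by rewrite closure_isolated_limit_point => -[].
Qed.

Lemma hausdorff_prod (X Y : topologicalType) :
  hausdorff_space X -> hausdorff_space Y -> hausdorff_space (X * Y)%type.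
Proof.
move=> hX hY [x1 y1] [x2 y2] c12.
have nbhsX (p : X * Y) A B : nbhs p.1 A -> nbhs p.2 B -> nbhs p (A `*` B).
  by move=> pA pB; exists (A, B).
congr pair; [apply: hX | apply: hY] => U V hU hV.
- have [[z w] [[Uz _] [Vz _]]] :=
    c12 _ _ (nbhsX (x1, y1) _ _ hU filterT) (nbhsX (x2, y2) _ _ hV filterT).
  by exists z.
- have [[z w] [[_ Uw] [_ Vw]]] :=
    c12 _ _ (nbhsX (x1, y1) _ _ filterT hU) (nbhsX (x2, y2) _ _ filterT hV).
  by exists w.
Qed.

Lemma sigma_compactX (X Y : topologicalType) :
  sigma_compact X -> sigma_compact Y -> sigma_compact (X * Y)%type.
Proof.
move=> [K [cK UK]] [L [cL UL]].
pose ij n := odflt (0, 0)%N (unpickle n).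
exists (fun n => K (ij n).1 `*` L (ij n).2); split => [n|].
  exact: compact_setX.
apply/seteqP; split => // -[x y] _.
have [i _ Kx] : (\bigcup_n K n) x by rewrite UK.
have [j _ Ly] : (\bigcup_n L n) y by rewrite UL.
by exists (pickle (i, j)) => //; rewrite /ij pickleK.
Qed.

Lemma graph_on_range (X Y : Type) (a : nat -> X) (b : nat -> Y) : injective a ->
  exists f : {x | range a x} -> Y, graph_on f = range (fun m => (a m, b m)).
Proof.
move=> ainj; pose f (x : {x | range a x}) := b (s2val (cid2 (proj2_sig x))).
exists f; apply/seteqP; split => [_ [x ->]|_ [m _ <-]].
  by rewrite /f; case: cid2 => /= m _ am; exists m; rewrite ?am.
have am : range a (a m) by exists m.
exists (exist _ (a m) am); rewrite /f /=.
by case: cid2 => /= k _ /ainj ->.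
Qed.

Lemma logn2_frequently (i N : nat) : exists2 m, (N <= m)%N & logn 2 m.+1 = i.
Proof.
have pos : (0 < 2 ^ i * N.*2.+1)%N by rewrite muln_gt0 expn_gt0.
exists (2 ^ i * N.*2.+1).-1.
  rewrite -ltnS prednK //; apply: leq_trans (leq_pmull _ _); last by rewrite expn_gt0.
  by rewrite ltnS -addnn leq_addr.
rewrite prednK // lognM ?expn_gt0 // pfactorK // logn_coprime ?addn0 //.
by rewrite coprime2n /= odd_double.
Qed.

Section pseudometric.
Variable R : realType.

Lemma inv_succ_lt (e : R) : 0 < e ->
  exists N, forall m, (N <= m)%N -> m.+1%:R^-1 < e.
Proof.
move=> e0; have [N] := ltr_add_invr e0; rewrite add0r => Ne.
exists N => m Nm; apply: le_lt_trans Ne.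
by rewrite lef_pV2 ?posrE ?ltr0Sn // ler_nat ltnS.
Qed.

Lemma sigma_compact_closed_dense_seq (M : pseudoMetricType R) (T : set M) (t0 : M) :
  sigma_compact M -> closed T -> T t0 ->
  exists s : nat -> M, (forall n, T (s n)) /\
    forall t, T t -> forall e, 0 < e -> exists n, ball t e (s n).
Proof.
move=> [K [cK UK]] clT Tt0.
have cover i k : finite_subset_cover (K i `&` T)
    (fun z => (ball z k.+1%:R^-1)°) (K i `&` T).
  apply: compact_cover_compact; first exact: compact_closedI.
  - by move=> z _; exact: open_interior.
  - by move=> z Cz; exists z => //; exact: nbhsx_ballx.
pose F i k := s2val (cid2 (cover i k)).
pose s n := let: (i, k, l) := odflt (0, 0, 0)%N (unpickle n) in nth t0 (F i k) l.
exists s; split => [n|t Tt e e0].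
  rewrite /s; case: (odflt _ _) => [[i k] l].
  have [lt|ge] := ltnP l (size (F i k)); last by rewrite nth_default.
  by have /(s2valP (cid2 (cover i k))) := mem_nth t0 lt; rewrite inE => -[].
have [i _ Kit] : (\bigcup_n K n) t by rewrite UK.
have [k /(_ k (leqnn k)) ke] := inv_succ_lt e0.
have [z zF bz] := s2valP' (cid2 (cover i k)) t (conj Kit Tt).
exists (pickle (i, k, index z (F i k))); rewrite /s pickleK /= nth_index //.
by apply/ball_sym/(le_ball (ltW ke)); exact: interior_subset.
Qed.

Lemma ball_infinite (M : metricType R) (x : M) (e : R) :
  ~ isolated [set: M] x -> 0 < e -> infinite_set (ball x e).
Proof.
move=> nx e0; rewrite -[ball x e]setIT.
apply: accessible_limit_point_infinite; last exact: nbhsx_ballx.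
  exact/hausdorff_accessible/metric_hausdorff.
exact: not_isolated_limit_point.
Qed.

Lemma injective_seq_in_balls (M : metricType R) (c : nat -> M) (r : nat -> R) :
  (forall x : M, ~ isolated [set: M] x) -> (forall m, 0 < r m) ->
  exists a : nat -> M, injective a /\ forall m, ball (c m) (r m) (a m).
Proof.
move=> noiso r0.
have fresh m (F : seq M) : exists x, ball (c m) (r m) x /\ x \notin F.
  have [x [bx Fx]] :=
    infinite_setN0 (infinite_setD (ball_infinite (noiso (c m)) (r0 m)) (finite_seq F)).
  by exists x; split => //; apply/negP.
pose pick m F := projT1 (cid (fresh m F)).
pose fix prefix m : seq M := if m is m'.+1 then pick m' (prefix m') :: prefix m' else [::].
have earlier j m : (j < m)%N -> pick j (prefix j) \in prefix m.
  elim: m => // m IH; rewrite ltnS leq_eqVlt => /orP[/eqP->|/IH jm] /=.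
    by rewrite inE eqxx.
  by rewrite inE jm orbT.
have neq_later j m : (j < m)%N -> pick j (prefix j) != pick m (prefix m).
  move=> /earlier jm; apply: contraTneq jm => ->.
  by have [] := projT2 (cid (fresh m (prefix m))).
exists (fun m => pick m (prefix m)); split => [j m /= ajm|m]; last first.
  by have [] := projT2 (cid (fresh m (prefix m))).
by case: (ltngtP j m) => // jm; have := neq_later _ _ jm; rewrite ajm eqxx.
Qed.

Section shadowing_sequence.
Variables (M : pseudoMetricType R) (T : set M) (c g : nat -> M).
Hypothesis Tc : forall m, T (c m).
Hypothesis gc : forall m, ball (c m) m.+1%:R^-1 (g m).

Lemma limit_point_range_subset :
  accessible_space M -> closed T -> limit_point (range g) `<=` T.
Proof.
move=> T1 clT t gt; apply: contrapT => Tt.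
have /nbhs_ballP[e /= e0 eT] : nbhs t (~` T).
  by apply: open_nbhs_nbhs; split => //; exact: closed_openC.
have e20 : 0 < e / 2 by rewrite divr_gt0.
have [N Nlt] := inv_succ_lt e20.
apply: (accessible_limit_point_infinite T1 gt (nbhsx_ballx t _ e20)).
apply: sub_finite_set (finite_image g (finite_II N)).
move=> y [bt [m _ gm]]; exists m => //=; rewrite ltnNge; apply/negP => Nm.
apply: (eT (c m)) (Tc m); rewrite [e]splitr; apply: ball_triangle bt _; rewrite -gm.
exact/ball_sym/(le_ball (ltW (Nlt m Nm)))/gc.
Qed.

Hypothesis c_frequently_dense : forall t, T t -> forall e, 0 < e ->
  forall N, exists2 m, (N <= m)%N & ball t e (c m).

Lemma subset_limit_point_range : injective g -> T `<=` limit_point (range g).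
Proof.
move=> ginj t Tt U /nbhs_ballP[e /= e0 eU].
have e20 : 0 < e / 2 by rewrite divr_gt0.
have [K Klt] := inv_succ_lt e20.
have frequently N : exists2 m, (N <= m)%N & U (g m).
  have [m Nm bm] := c_frequently_dense Tt e20 (maxn N K).
  exists m; first exact: leq_trans (leq_maxl _ _) Nm.
  apply: eU; rewrite [e]splitr; apply: ball_triangle bm _.
  exact: le_ball (ltW (Klt m (leq_trans (leq_maxr _ _) Nm))) _ (gc m).
have [m1 _ Um1] := frequently 0%N; have [m2 m12 Um2] := frequently m1.+1.
have [g1t|g1t] := eqVneq (g m1) t; last by exists (g m1); split => //; exists m1.
exists (g m2); split => //; last by exists m2.
by rewrite -g1t; apply: contraTneq m12 => /ginj ->; rewrite ltnn.
Qed.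

End shadowing_sequence.
End pseudometric.

Theorem lemma2p5 (R : realType) (X Y : metricType R) :
  sigma_compact X -> sigma_compact Y ->
  (forall x : X, ~ isolated [set: X] x) ->
  forall T : set (X * Y), closed T ->
  exists (A : set X) (f : {x : X | A x} -> Y), countable A /\ L_f f = T.
Proof.
move=> sX sY noiso T clT.
have [[t0 Tt0]|T0] := pselect (T !=set0); last first.
  exists set0, (fun x => False_rect _ (proj2_sig x)); split; first exact: countable0.
  apply/seteqP; split => [t /(_ _ filterT) [_ [_ [[x []]]]]|t Tt].
  by case: T0; exists t.
have [s [Ts s_dense]] :=
  sigma_compact_closed_dense_seq (sigma_compactX sX sY) clT Tt0.
pose c m := s (logn 2 m.+1).
have [a [ainj ac]] : exists a : nat -> X,
    injective a /\ forall m, ball (c m).1 m.+1%:R^-1 (a m).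
  by apply: injective_seq_in_balls.
pose g m := (a m, (c m).2).
have [f fg] := graph_on_range (fun m => (c m).2) ainj.
exists (range a), f; split; first exact: card_le_trans (card_image_le a setT) (countableP _).
have gc m : ball (c m) m.+1%:R^-1 (g m) by split; [exact: ac | exact: ballxx].
rewrite /L_f fg; apply/seteqP; split.
  apply: (limit_point_range_subset (fun m => Ts _) gc) => //.
  exact: hausdorff_accessible (hausdorff_prod (@metric_hausdorff _ X) (@metric_hausdorff _ Y)).
apply: (subset_limit_point_range gc).
  move=> t Tt e e0 N; have [i bi] := s_dense t Tt e e0.
  by have [m Nm mi] := logn2_frequently i N; exists m; rewrite // /c mi.
by move=> m1 m2 /(congr1 fst) /ainj.
Qed.
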